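(* There exists a binary linear $[690,659,3]_2 4$ code (length $690$, codimension $31$, minimum distance $3$, covering radius $4$). Consequently $\ell_2(31,4)\le690$.
   Context: $[n,n-r,d]_2R$: binary linear code of length $n$, codimension $r$, minimum distance $d$, covering radius $R$ (smallest $R$ such that every vector of $\mathbb{F}_2^r$ is a sum of at most $R$ columns of a parity-check matrix). $\ell_2(r,R)$ is the smallest length of a binary linear code of codimension $r$ and covering radius $R$. *)

From mathcomp Require Import all_boot all_algebra.
Set Implicit Arguments. Unset Strict Implicit. Unset Printing Implicit Defensive.
Import GRing.Theory.
Local Open Scope ring_scope.

(* A binary linear code of length n and codimension r is given by a
   parity-check matrix H : 'M['F_2]_(r, n) of full row rank r;
   the code is { c : 'cV_n | H *m c = 0 }. *)

Definition wt n (c : 'cV['F_2]_n) : nat := #|[set j | c j 0 != 0]|.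

Definition min_dist r n (H : 'M['F_2]_(r, n)) (d : nat) : Prop :=
  (exists c : 'cV['F_2]_n, H *m c = 0 /\ c != 0 /\ wt c = d) /\
  (forall c : 'cV['F_2]_n, H *m c = 0 -> c != 0 -> (d <= wt c)%N).

Definition sum_of_at_most r n (H : 'M['F_2]_(r, n)) (R : nat) (s : 'cV['F_2]_r) : Prop :=
  exists S : {set 'I_n}, (#|S| <= R)%N /\ s = \sum_(j in S) col j H.

Definition covering_radius r n (H : 'M['F_2]_(r, n)) (R : nat) : Prop :=
  (forall s, sum_of_at_most H R s) /\
  (forall R', (forall s, sum_of_at_most H R' s) -> (R <= R')%N).

Definition is_code (n r d R : nat) : Prop :=
  exists H : 'M['F_2]_(r, n), \rank H = r /\ min_dist H d /\ covering_radius H R.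

(* The parity-check matrix has 21 blocks of 32 columns plus 18 padding columns.
   Column (p, x), for a label index p < 21 and x in GF(32), is
   (lambda_p; x; x a_p; x a_p^2; x a_p^3), where the a_p are distinct elements of
   GF(32) (written over F_2 in 5 bits each) and lambda_p in F_2^11 are 21 labels
   such that every vector of F_2^11 is the sum of four distinct labels.
   A syndrome (u; t) is then a sum of four columns: choose four labels summing to u,
   and solve the invertible Vandermonde system sum_k x_k a_(p_k)^c = t_c.
   All columns are nonzero and distinct, and a padding column is the sum of two
   columns of one block, so the minimum distance is 3.  Radius 3 is impossible
   because sum_(k <= 3) 'C(690, k) < 2^31, and covering implies full rank. *)

From HB Require Import structures.
From mathcomp Require Import all_boot all_algebra finfield zify.
Set Implicit Arguments. Unset Strict Implicit. Unset Printing Implicit Defensive.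
Import GRing.Theory VectorInternalTheory.
Local Open Scope ring_scope.

Lemma F2_addrr (x : 'F_2) : x + x = 0.
Proof. exact: (addrr_pchar2 (pchar_Fp (isT : prime 2)) x). Qed.

Lemma F2_natr_addb (a b : bool) : ((a (+) b)%:R : 'F_2) = a%:R + b%:R.
Proof. by case: a; case: b; rewrite ?addr0 ?add0r ?F2_addrr. Qed.

Lemma F2_natr_neq0 (x : 'F_2) : x = (x != 0)%:R.
Proof. by case: x => -[|[|k]] lt_x2; apply: val_inj. Qed.

Lemma F2mx_addrr m n (A : 'M['F_2]_(m, n)) : A + A = 0.
Proof. by apply/matrixP => i j; rewrite !mxE F2_addrr. Qed.

Lemma F2mx_add_eq0 m n (A B : 'M['F_2]_(m, n)) : A + B = 0 -> A = B.
Proof. by move=> AB0; rewrite -[B]add0r -AB0 -addrA F2mx_addrr addr0. Qed.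

Section ParityCheck.
Variables (r n : nat) (H : 'M['F_2]_(r, n)).

Definition supp (c : 'cV['F_2]_n) : {set 'I_n} := [set j | c j 0 != 0].
Definition chi (S : {set 'I_n}) : 'cV['F_2]_n := \col_j (j \in S)%:R.

Lemma chi_supp c : chi (supp c) = c.
Proof. by apply/matrixP => j k; rewrite (ord1 k) !mxE inE -F2_natr_neq0. Qed.

Lemma supp_chi S : supp (chi S) = S.
Proof.
by apply/setP => j; rewrite !inE mxE; case: (j \in S); rewrite ?oner_eq0 ?eqxx.
Qed.

Lemma supp0 : supp 0 = set0.
Proof. by apply/setP => j; rewrite !inE mxE eqxx. Qed.

Lemma mulmx_chi S : H *m chi S = \sum_(j in S) col j H.
Proof.
apply/matrixP => i k; rewrite (ord1 k) !mxE summxE [RHS]big_mkcond /=.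
by apply: eq_bigr => j _; rewrite !mxE; case: (j \in S); rewrite ?mulr1 ?mulr0.
Qed.

Lemma min_dist3
    (col_neq0 : forall j, col j H != 0) (col_inj : injective (fun j => col j H)) :
    (exists j1 j2 j3, [/\ j1 != j2, j1 != j3, j2 != j3 &
                           col j1 H + col j2 H + col j3 H = 0]) ->
  min_dist H 3.
Proof.
case=> j1 [j2 [j3 [n12 n13 n23 sum0]]].
have sum_pair x y : x != y -> \sum_(j in [set x; y]) col j H = col x H + col y H.
  by move=> nxy; rewrite big_setU1 ?inE //= big_set1.
split.
  exists (chi (j1 |: [set j2; j3])).
  have S3 : #|(j1 |: [set j2; j3])| = 3%N.
    by rewrite cardsU1 !inE negb_or n12 n13 cards2 n23.
  split.
    by rewrite mulmx_chi big_setU1 ?inE ?negb_or ?n12 ?n13 //= sum_pair // addrA.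
  split; last by rewrite /wt -/(supp _) supp_chi.
  by apply: contra_eqN S3 => /eqP chi0; rewrite -(supp_chi (_ |: _)) chi0 supp0 cards0.
move=> c Hc0 c0; rewrite /wt -/(supp c) leqNgt; apply/negP => small.
move: Hc0; rewrite -(chi_supp c) mulmx_chi.
move: small; case sz: #|supp c| => [|[|[|//]]] _.
- by move: c0; rewrite -(chi_supp c) (cards0_eq sz) -supp0 chi_supp eqxx.
- move/eqP/cards1P: sz => [j ->]; rewrite big_set1 => /eqP.
  by rewrite (negPf (col_neq0 j)).
- move/eqP/cards2P: sz => [x [y [nxy ->]]].
  by rewrite sum_pair // => /F2mx_add_eq0/col_inj/eqP; rewrite (negPf nxy).
Qed.

Lemma sum_of_at_most_inj m (f : 'I_m -> 'I_n) :
  injective f -> sum_of_at_most H m (\sum_k col (f k) H).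
Proof.
move=> f_inj; exists (f @: setT); rewrite card_imset // cardsT card_ord.
split=> //; rewrite big_imset /=; last exact: in2W.
by apply: eq_bigl => k; rewrite inE.
Qed.

Lemma rank_of_cover R : (forall s, sum_of_at_most H R s) -> \rank H = r.
Proof.
move=> cover; rewrite -mxrank_tr; apply/eqP; rewrite -/(row_full H^T) -sub1mx.
apply/row_subP => i.
have [S [_ eS]] := cover (row i 1%:M)^T.
by rewrite -[row i _]trmxK eS -mulmx_chi trmx_mul submxMl.
Qed.

Lemma card_small_sets R :
  (#|[set S : {set 'I_n} | #|S| <= R]| <= \sum_(k < R.+1) 'C(n, k))%N.
Proof.
elim: R => [|R IH].
  rewrite big_ord1 -[X in 'C(X, _)]card_ord -card_draws; apply: subset_leq_card.
  by apply/subsetP => S; rewrite !inE leqn0.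
rewrite big_ord_recr /= -[X in 'C(X, _)]card_ord -card_draws.
apply: leq_trans (leq_add IH (leqnn _)); apply: leq_trans (leq_card_setU _ _).1.
apply: subset_leq_card; apply/subsetP => S; by rewrite !inE leq_eqVlt ltnS orbC.
Qed.

Lemma sphere_covering_bound R :
  (forall s, sum_of_at_most H R s) -> (2 ^ r <= \sum_(k < R.+1) 'C(n, k))%N.
Proof.
move=> cover; apply: leq_trans (card_small_sets R).
pose sumcols (S : {set 'I_n}) := \sum_(j in S) col j H.
have onto : [set: 'cV['F_2]_r] \subset sumcols @: [set S : {set 'I_n} | (#|S| <= R)%N].
  by apply/subsetP => s _; have [S [SR ->]] := cover s; apply: imset_f; rewrite inE.
apply: leq_trans (leq_trans (subset_leq_card onto) (leq_imset_card _ _)).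
by rewrite cardsT card_mx card_Fp // muln1.
Qed.

Lemma covering_radius_of_cover R :
  (forall s, sum_of_at_most H R s) -> (\sum_(k < R) 'C(n, k) < 2 ^ r)%N ->
  covering_radius H R.
Proof.
move=> cover sphere; split=> // R' cover'; rewrite leqNgt; apply/negP => ltR'R.
suff : (2 ^ r < 2 ^ r)%N by rewrite ltnn.
apply: leq_ltn_trans (sphere_covering_bound cover') (leq_ltn_trans _ sphere).
rewrite (big_ord_widen _ _ ltR'R) [leqLHS]big_mkcond leq_sum // => k _.
by case: ifP.
Qed.

End ParityCheck.

Definition powers (R : pzSemiRingType) m (x : R) : 'rV[R]_m := \row_(c < m) x ^+ c.

Lemma Vandermonde_unitmx (K : fieldType) m (a : 'rV[K]_m) :
  injective (a 0) -> Vandermonde m a \in unitmx.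
Proof.
move=> a_inj; rewrite unitmxE det_Vandermonde unitfE.
apply/prodf_neq0 => i _; apply/prodf_neq0 => j ltij; rewrite subr_eq0.
by apply: contraTneq ltij => /a_inj ->; rewrite ltnn.
Qed.

Lemma powers_span (K : fieldType) m (b : 'I_m -> K) (t : 'rV[K]_m) :
  injective b -> exists x : 'I_m -> K, t = \sum_k x k *: powers m (b k).
Proof.
move=> b_inj; pose V := (Vandermonde m (\row_k b k))^T.
have V_unit : V \in unitmx.
  by rewrite unitmx_tr Vandermonde_unitmx // => i j; rewrite !mxE; apply: b_inj.
exists (fun k => (t *m invmx V) 0 k).
rewrite (eq_bigr (fun k => (t *m invmx V) 0 k *: row k V)); last first.
  by move=> k _; congr (_ *: _); apply/rowP => c; rewrite !mxE.
by rewrite -mulmx_sum_row mulmxKV.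
Qed.

Definition GF32 : finFieldType := s2val (@pPrimePowerField 2 5 isT isT).

Lemma pchar_GF32 : (2 \in [pchar GF32])%N.
Proof. exact: s2valP (@pPrimePowerField 2 5 isT isT). Qed.

Definition F := pPrimeCharType pchar_GF32.

Lemma card_F : #|F| = 32%N.
Proof. exact: s2valP' (@pPrimePowerField 2 5 isT isT). Qed.

Lemma dim_F : dim F = 5%N.
Proof. by rewrite -dimvf pprimeChar_dimf card_F. Qed.

Definition coords (x : F) : 'rV['F_2]_5 := castmx (erefl, dim_F) (v2r x).
Definition of_coords (v : 'rV['F_2]_5) : F := r2v (castmx (erefl, esym dim_F) v).

Lemma coordsK : cancel coords of_coords.
Proof. by move=> x; rewrite /of_coords (castmxK (erefl 1%N) dim_F) v2rK. Qed.

Lemma of_coordsK : cancel of_coords coords.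
Proof. by move=> v; rewrite /coords r2vK (castmxKV (erefl 1%N) dim_F). Qed.

Lemma coordsD x y : coords (x + y) = coords x + coords y.
Proof. by apply/rowP => i; rewrite !(castmxE, mxE) raddfD mxE. Qed.

(* Locked so that unification never unfolds the arithmetic of F. *)
HB.lock Definition pack (u : 'rV['F_2]_11) (t : 'rV[F]_4) : 'cV['F_2]_31 :=
  (row_mx u (mxvec (\matrix_(c < 4) coords (t 0 c))))^T.

Lemma packD u t u' t' : pack u t + pack u' t' = pack (u + u') (t + t').
Proof.
rewrite !pack.unlock -linearD /=; congr (_^T).
(* The sum lives in 'rV_31, not 'rV_(11 + 4 * 5): add_row_mx only applies up to conversion. *)
transitivity (row_mx (u + u')
  (mxvec (\matrix_c coords (t 0 c)) + mxvec (\matrix_c coords (t' 0 c)))).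
  exact: (add_row_mx u _ u' _).
rewrite -raddfD /=; do 2!f_equal.
by apply/matrixP => c b; rewrite !mxE coordsD mxE.
Qed.

Lemma pack0 : pack 0 0 = 0.
Proof. by apply: (addrI (pack 0 0)); rewrite packD !addr0. Qed.

Lemma pack_sum I (s : seq I) (P : pred I) (u : I -> 'rV['F_2]_11) (t : I -> 'rV[F]_4) :
  \sum_(i <- s | P i) pack (u i) (t i) =
  pack (\sum_(i <- s | P i) u i) (\sum_(i <- s | P i) t i).
Proof.
apply: (big_rec3 (fun a b c => a = pack b c)); first by rewrite pack0.
by move=> i a b c _ ->; rewrite packD.
Qed.

Lemma pack_inj u t u' t' : pack u t = pack u' t' -> u = u' /\ t = t'.
Proof.
rewrite !pack.unlock => /trmx_inj eq_rows.
have [-> eq_vec] := eq_row_mx (n1 := 11) eq_rows; split=> //.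
have /matrixP eq_coords := can_inj (@mxvecK _ 4 5) eq_vec.
apply/rowP => c; apply: (can_inj coordsK); apply/rowP => b.
by have := eq_coords c b; rewrite !mxE.
Qed.

Lemma pack_surj s : exists u t, s = pack u t.
Proof.
pose v : 'rV_(11 + 4 * 5) := s^T.
exists (lsubmx v), (\row_c of_coords (row c (vec_mx (rsubmx v)))).
rewrite pack.unlock (_ : \matrix_c _ = vec_mx (rsubmx v)) ?vec_mxK ?hsubmxK ?trmxK //.
by apply/row_matrixP => c; rewrite rowK mxE of_coordsK.
Qed.

(* Bit i of the binary expansion of labn`_p is coordinate i of label p. *)
Definition labn : seq nat :=
  [:: 1831; 279; 428; 1541; 1778; 809; 988; 1301; 1100; 1190; 1578;
      1241; 103; 1392; 1574; 1314; 615; 1570; 1048; 393; 365].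

Definition bits (m : nat) : bitseq := mkseq (fun i => odd (m %/ 2 ^ i)) 11.

Definition label_bits : seq bitseq := map bits labn.

Definition label (p : 'I_21) : 'rV['F_2]_11 :=
  \row_i (nth false (nth [::] label_bits p) i)%:R.

Fixpoint ksubseqs T k (s : seq T) : seq (seq T) :=
  match k, s with
  | 0, _ => [:: [::]]
  | _.+1, [::] => [::]
  | k'.+1, x :: s' => map (cons x) (ksubseqs k' s') ++ ksubseqs k s'
  end.

(* Indices are nats: evaluating ordinal enumerations in the VM is far too slow. *)
Definition quads : seq (seq nat) := ksubseqs 4 (iota 0 21).

Definition xor_labels (J : seq nat) : bitseq :=
  foldr (fun p l =>
           mkseq (fun i => nth false (nth [::] label_bits p) i (+) nth false l i) 11)
        (nseq 11 false) J.

Fixpoint bitseqs n : seq bitseq :=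
  if n is n'.+1 then [seq b :: l | b <- [:: false; true], l <- bitseqs n'] else [:: [::]].

(* Any relation would do for [mem_sort]; the lexicographic one makes the
   coverage check below a linear subsequence test. *)
Fixpoint lex_le (a b : bitseq) : bool :=
  match a, b with
  | x :: a', y :: b' => if x == y then lex_le a' b' else y
  | _, _ => true
  end.

Lemma quads_wf : all (fun J => [&& size J == 4, uniq J & all (gtn 21) J]) quads.
Proof. by vm_compute. Qed.

Lemma xor_labels_onto : subseq (bitseqs 11) (sort lex_le (map xor_labels quads)).
Proof. by vm_compute. Qed.

Lemma uniq_label_bits : uniq label_bits.
Proof. by vm_compute. Qed.

Lemma label_bits_neq0 : all (has id) label_bits.
Proof. by vm_compute. Qed.

Lemma mem_bitseqs n (l : bitseq) : size l = n -> l \in bitseqs n.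
Proof.
elim: n l => [|n IH] [|b l] // [/IH l_n].
by apply/allpairsP; exists (b, l); case: b.
Qed.

Lemma size_label_bits (p : 'I_21) : size (nth [::] label_bits p) = 11%N.
Proof. by rewrite (nth_map 0) ?size_mkseq. Qed.

Lemma F2_natr_inj : injective (fun b : bool => b%:R : 'F_2).
Proof. by do 2!case. Qed.

Lemma label_inj : injective label.
Proof.
move=> p p' /rowP eq_label; apply/val_inj/eqP.
rewrite -(nth_uniq [::] _ _ uniq_label_bits) ?size_map /= ?ltn_ord //.
apply/eqP/(eq_from_nth (x0 := false)); rewrite !size_label_bits // => i lti.
by have := eq_label (Ordinal lti); rewrite !mxE => /F2_natr_inj.
Qed.

Lemma label_neq0 p : label p != 0.
Proof.
have := allP label_bits_neq0 _ (@mem_nth _ [::] label_bits p (ltn_ord p)).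
case/hasP => b /(nthP false)[i]; rewrite size_label_bits => lti <- bit_i.
by apply/eqP => /rowP/(_ (Ordinal lti)); rewrite !mxE bit_i; apply/eqP; rewrite oner_eq0.
Qed.

Lemma xor_labels_nth J (i : 'I_11) :
  (nth false (xor_labels J) i)%:R =
  \sum_(p <- J) (nth false (nth [::] label_bits p) i)%:R :> 'F_2.
Proof.
elim: J => [|p J IH]; first by rewrite big_nil nth_nseq if_same.
by rewrite big_cons /= nth_mkseq // F2_natr_addb IH.
Qed.

Lemma label_sum4 (u : 'rV['F_2]_11) :
  exists q : 'I_4 -> 'I_21, injective q /\ u = \sum_k label (q k).
Proof.
pose l := mkseq (fun i => u 0 (inord i) != 0) 11.
have /(mem_subseq xor_labels_onto) : l \in bitseqs 11 by rewrite mem_bitseqs ?size_mkseq.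
rewrite mem_sort => /mapP[J JQ lJ].
have /and3P[/eqP J4 uJ /allP J21] := allP quads_wf J JQ.
have Jk (k : 'I_4) : (nth 0 J k < 21)%N by apply: J21; rewrite mem_nth ?J4.
exists (fun k => inord (nth 0 J k)); split.
  move=> k k' /(congr1 val); rewrite /= !inordK // => /eqP.
  by rewrite nth_uniq ?J4 // => /eqP /val_inj.
apply/rowP => i; rewrite summxE [LHS]F2_natr_neq0.
have -> : (u 0 i != 0) = nth false (xor_labels J) i by rewrite -lJ nth_mkseq // inord_val.
rewrite xor_labels_nth (big_nth 0) J4 big_mkord; apply: eq_bigr => k _.
by rewrite mxE inordK.
Qed.

Definition point (p : 'I_21) : F :=
  enum_val (cast_ord (esym card_F) (widen_ord (isT : (21 <= 32)%N) p)).

Lemma point_inj : injective point.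
Proof. by move=> p p' /enum_val_inj/cast_ord_inj/(congr1 val) /= /val_inj. Qed.

Lemma scale_powers_inj m (z x y : F) : x *: powers m.+1 z = y *: powers m.+1 z -> x = y.
Proof. by move=> /rowP/(_ ord0); rewrite !mxE !expr0 !mulr1. Qed.

Definition block_col (p : 'I_21) (x : F) : 'cV['F_2]_31 :=
  pack (label p) (x *: powers 4 (point p)).

Definition pad_col (y : F) : 'cV['F_2]_31 := pack 0 (y *: powers 4 (point ord0)).

Definition pad_elts : seq F := take 18 (enum (predC1 0)).

Definition cols : seq 'cV['F_2]_31 :=
  [seq block_col p x | p <- enum 'I_21, x <- enum F] ++ map pad_col pad_elts.

Definition Hm : 'M['F_2]_(31, 690) := \matrix_(i, j) (nth 0 cols j) i 0.

Lemma block_col_inj p x p' x' : block_col p x = block_col p' x' -> p = p' /\ x = x'.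
Proof.
case/pack_inj => /label_inj eq_p; rewrite -eq_p => /scale_powers_inj.
by split.
Qed.

Lemma block_col_neq_pad p x y : block_col p x != pad_col y.
Proof. by apply/eqP => /pack_inj[/eqP]; rewrite (negPf (label_neq0 p)). Qed.

Lemma pad_col_inj : injective pad_col.
Proof. by move=> y y' /pack_inj[_ /scale_powers_inj]. Qed.

Lemma pad_elts_neq0 y : y \in pad_elts -> y != 0.
Proof. by move/mem_take; rewrite mem_enum. Qed.

Lemma size_cols : size cols = 690%N.
Proof.
rewrite size_cat size_allpairs size_map size_takel; last by rewrite -cardE cardC1 card_F.
by rewrite size_enum_ord -cardE card_F.
Qed.

Lemma uniq_cols : uniq cols.
Proof.
rewrite cat_uniq (map_inj_uniq pad_col_inj) (take_uniq _ (enum_uniq _)) andbT.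
apply/andP; split.
  apply: allpairs_uniq; rewrite ?enum_uniq // => -[p x] [p' x'] _ _ /=.
  by case/block_col_inj => -> ->.
apply/hasPn => _ /mapP[y _ ->]; apply/allpairsP => -[[p x] [_ _ /eqP]].
by rewrite eq_sym (negPf (block_col_neq_pad _ _ _)).
Qed.

Lemma cols_neq0 : 0 \notin cols.
Proof.
rewrite mem_cat negb_or; apply/andP; split.
  apply/allpairsP => -[[p x] [_ _ /esym]]; rewrite -pack0 => /pack_inj[/eqP].
  by rewrite (negPf (label_neq0 p)).
apply/mapP => -[y /pad_elts_neq0 y0 /esym].
rewrite -pack0 -(scale0r (powers 4 (point ord0))).
by move=> /pack_inj[_ /scale_powers_inj/eqP]; rewrite (negPf y0).
Qed.

Lemma col_HmE j : col j Hm = nth 0 cols j.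
Proof. by apply/matrixP => i k; rewrite (ord1 k) !mxE. Qed.

Definition col_idx (v : 'cV['F_2]_31) : 'I_690 := inord (index v cols).

Lemma col_idxK v : v \in cols -> col (col_idx v) Hm = v.
Proof. by move=> cols_v; rewrite col_HmE inordK ?nth_index // -size_cols index_mem. Qed.

Lemma Hm_col_neq0 j : col j Hm != 0.
Proof.
rewrite col_HmE; apply: contraNneq cols_neq0 => <-.
by rewrite mem_nth // size_cols.
Qed.

Lemma Hm_col_inj : injective (fun j => col j Hm).
Proof.
move=> j j'; rewrite /= !col_HmE => /eqP; rewrite nth_uniq ?size_cols ?uniq_cols //.
by move=> /eqP/val_inj.
Qed.

Lemma Hm_weight3 : exists j1 j2 j3,
  [/\ j1 != j2, j1 != j3, j2 != j3 & col j1 Hm + col j2 Hm + col j3 Hm = 0].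
Proof.
have [y y_pad] : exists y, y \in pad_elts.
  by exists (nth 0 pad_elts 0); rewrite mem_nth // size_takel // -cardE cardC1 card_F.
have j_neq v w : v \in cols -> w \in cols -> v != w -> col_idx v != col_idx w.
  move=> v_in w_in; apply: contra_neq => /(congr1 (fun k => col k Hm)).
  by rewrite !col_idxK.
have block_in p x : block_col p x \in cols by rewrite mem_cat allpairs_f ?mem_enum.
have pad_in : pad_col y \in cols by rewrite mem_cat map_f ?orbT.
have y_neq0 : block_col ord0 0 != block_col ord0 y.
  by apply/eqP => /block_col_inj[_ /eqP]; rewrite eq_sym (negPf (pad_elts_neq0 y_pad)).
exists (col_idx (block_col ord0 0)), (col_idx (block_col ord0 y)), (col_idx (pad_col y)).
split.
- exact: j_neq (block_in _ _) (block_in _ _) y_neq0.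
- exact: j_neq (block_in _ _) pad_in (block_col_neq_pad _ _ _).
- exact: j_neq (block_in _ _) pad_in (block_col_neq_pad _ _ _).
rewrite (col_idxK (block_in ord0 0)) (col_idxK (block_in ord0 y)) (col_idxK pad_in).
rewrite /block_col /pad_col !packD F2mx_addrr -addrA -scalerDl.
by rewrite (addrr_pchar2 pchar_GF32) scale0r !addr0 pack0.
Qed.

Lemma Hm_cover s : sum_of_at_most Hm 4 s.
Proof.
have [u [t ->]] := pack_surj s.
have [q [q_inj ->]] := label_sum4 u.
have [x ->] := powers_span t (inj_comp point_inj q_inj).
have cols_q k : block_col (q k) (x k) \in cols by rewrite mem_cat allpairs_f ?mem_enum.
pose j k := col_idx (block_col (q k) (x k)).
have j_inj : injective j.
  move=> k k' /(congr1 (fun i => col i Hm)).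
  by rewrite !col_idxK // => /block_col_inj[/q_inj].
rewrite -pack_sum (eq_bigr (fun k => col (j k) Hm)) => [|k _]; last by rewrite col_idxK.
exact: sum_of_at_most_inj.
Qed.

Lemma bin_leq_exp n k : ('C(n, k) <= n ^ k)%N.
Proof.
rewrite -(leq_pmul2r (fact_gt0 k)) bin_ffact; apply: leq_trans (leq_pmulr _ (fact_gt0 k)).
elim: k => [|k IH]; first by rewrite ffactn0.
by rewrite ffactnSr expnSr leq_mul // leq_subr.
Qed.

Lemma binomial_sum_690_lt : (\sum_(k < 4) 'C(690, k) < 2 ^ 31)%N.
Proof.
rewrite !big_ord_recr big_ord0 /= bin0 bin1.
have := bin_leq_exp 690 2; have := bin_leq_exp 690 3; lia.
Qed.

Local Close Scope ring_scope.

Theorem theorem9p2 :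
  exists H : 'M['F_2]_(31, 690),
    \rank H = 31 /\ min_dist H 3 /\ covering_radius H 4.
Proof.
exists Hm; split; first exact: rank_of_cover Hm_cover.
split; first exact: min_dist3 Hm_col_neq0 Hm_col_inj Hm_weight3.
exact: covering_radius_of_cover Hm_cover binomial_sum_690_lt.
Qed.
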